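(* Let $n,k$ be integers with $1\le k\le n<2k$ and set $\delta_k=\frac{1}{3k}$. There is a constant $M_0$ depending only on $n,k$ such that for every $\kappa=(\kappa_1,\dots,\kappa_n)\in\Gamma_k$ whose maximum entry $\kappa_1$ satisfies $\kappa_1\ge M_0$, and all indices $i\ne l$, $$(2-\delta_k)e^{\kappa_l}\sigma_{k-2}(\kappa|il)+(2-\delta_k)\frac{e^{\kappa_l}-e^{\kappa_i}}{\kappa_l-\kappa_i}\sigma_{k-1}(\kappa|l)\ge\frac{e^{\kappa_l}}{\kappa_1}\sigma_{k-1}(\kappa|i).$$
   Context: $\sigma_m$ is the $m$-th elementary symmetric function ($\sigma_0=1$, $\sigma_m=0$ for $m<0$); $\Gamma_k=\{\kappa\in\mathbb{R}^n:\sigma_m(\kappa)>0,\ m=1,\dots,k\}$; $(\kappa|ab)$ denotes $\kappa$ with the entries of indices $a,b$ deleted and $\sigma_m(\kappa|ab)=\sigma_m((\kappa|ab))$. When $\kappa_l=\kappa_i$, the difference quotient $\frac{e^{\kappa_l}-e^{\kappa_i}}{\kappa_l-\kappa_i}$ is interpreted as its limit $e^{\kappa_i}$. *)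

From HB Require Import structures.
From mathcomp Require Import all_boot all_order all_algebra.
From mathcomp Require Import all_classical all_reals all_analysis.
Set Implicit Arguments. Unset Strict Implicit. Unset Printing Implicit Defensive.
Import Order.TTheory GRing.Theory Num.Theory.
Local Open Scope ring_scope.

Definition esym_on {R : realType} {n : nat} (m : int) (kappa : 'I_n -> R)
  (S : {set 'I_n}) : R :=
  match m with
  | Posz m' => \sum_(A : {set 'I_n} | (A \subset S) && (#|A| == m'))
                 \prod_(j in A) kappa j
  | Negz _ => 0
  end.

Definition sigma {R : realType} {n : nat} (m : int) (kappa : 'I_n -> R) : R :=
  esym_on m kappa [set: 'I_n].

Definition sigma1 {R : realType} {n : nat} (m : int) (kappa : 'I_n -> R)
  (a : 'I_n) : R := esym_on m kappa [set~ a].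

Definition sigma2 {R : realType} {n : nat} (m : int) (kappa : 'I_n -> R)
  (a b : 'I_n) : R := esym_on m kappa (~: [set a; b]).

Definition in_Gamma {R : realType} {n : nat} (k : nat) (kappa : 'I_n -> R) : Prop :=
  forall m : nat, (1 <= m <= k)%N -> 0 < sigma m%:Z kappa.

(* (e^a - e^b)/(a - b), interpreted as e^b when a = b *)
Definition exp_dq {R : realType} (a b : R) : R :=
  if a == b then expR b else (expR a - expR b) / (a - b).

From HB Require Import structures.
From mathcomp Require Import all_boot all_order all_algebra.
From mathcomp Require Import all_classical all_reals all_analysis.
(* Re-imported so that [set0], [subsetP], [setD1K], ... refer to finite sets
   rather than to their classical_sets homonyms. *)
From mathcomp Require Import fintype finset.
From mathcomp Require Import polyorder polyrcf.
From mathcomp.algebra_tactics Require Import ring lra.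
Set Implicit Arguments. Unset Strict Implicit. Unset Printing Implicit Defensive.
Import Order.TTheory GRing.Theory Num.Theory.
Local Open Scope ring_scope.

(* Newton: the coefficients of a real-rooted polynomial are log-concave, since
   real-rootedness survives differentiation (Rolle).  Applied to
   [\prod_(j in S) (1 + kappa_j X)] this gives [s_m s_(m+2) <= s_(m+1)^2] for the
   elementary symmetric functions, whence deleting an entry maps Gamma_k into
   Gamma_(k-1), and [k s_k(kappa|j) <= (n - k) kappa_1 s_(k-1)(kappa|j)] bounds
   every entry below: [k (- kappa_j) <= (n - k) kappa_1 <= (k - 1) kappa_1].

   With [a := s_(k-2)(kappa|il) >= 0], [b := s_(k-1)(kappa|il)] and [D] the
   difference quotient, [s_(k-1)(kappa|i) = kappa_l a + b], [s_(k-1)(kappa|l) =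
   kappa_i a + b] and [D (kappa_l - kappa_i) = e^kappa_l - e^kappa_i], so the left
   side equals [(2 - delta) (e^kappa_i a + D s_(k-1)(kappa|i))].  It remains to
   see [e^kappa_l <= (2 - delta) kappa_1 D]: convexity gives
   [e^kappa_l <= (1 + |kappa_l - kappa_i|) D], and the entry bounds give
   [1 + |kappa_l - kappa_i| <= 1 + (2 - 1/k) kappa_1 <= (2 - delta) kappa_1]
   as soon as [kappa_1 >= M0 := 3k]. *)

Section RealRootedPolynomials.
Variable R : rcfType.
Implicit Types (p q : {poly R}) (s : seq R).

Definition real_rooted p := exists c s, p = c *: \prod_(x <- s) ('X - x%:P).

Lemma real_rootedM p q : real_rooted p -> real_rooted q -> real_rooted (p * q).
Proof.
move=> [c [s ->]] [d [t ->]]; exists (c * d), (s ++ t).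
by rewrite -scalerAl -scalerAr scalerA big_cat.
Qed.

Lemma prod_XsubC_dvdp s q : q != 0 ->
  (forall x, count_mem x s <= mup x q)%N -> \prod_(x <- s) ('X - x%:P) %| q.
Proof.
elim: s q => [|y s IHs] q q_neq0 count_le; first by rewrite big_nil dvd1p.
have : ('X - y%:P) %| q by rewrite XsubC_dvd // (leq_trans _ (count_le y)) //= eqxx.
case/dvdpP=> r q_eq.
have r_neq0 : r != 0 by apply: contraNneq q_neq0; rewrite q_eq => ->; rewrite mul0r.
rewrite big_cons q_eq [r * _]mulrC dvdp_mul2l ?polyXsubC_eq0 // IHs // => x.
have := count_le x; rewrite q_eq mupM ?polyXsubC_eq0 //.
have := @mup_XsubCX _ 1 x y; rewrite expr1 => -> /=.
by rewrite eq_sym; case: (x == y); rewrite ?addn1 ?addn0.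
Qed.

Lemma dvdp_deriv_exp_XsubC x m p :
  ('X - x%:P) ^+ m.+1 %| p -> ('X - x%:P) ^+ m %| p^`().
Proof.
case/dvdpP=> q ->; rewrite derivM deriv_exp derivXsubC mul1r.
apply: dvdp_add; first by rewrite exprS mulrA dvdp_mull.
by rewrite -mulr_natl dvdp_mull // dvdp_mulIr.
Qed.

Lemma rolle_interlacing p x s : all (root p) (x :: s) -> path <%R x s ->
  exists w : seq R, [/\ size w = size s, uniq w, all (root p^`()) w
    & all (fun z => (x < z) && (z \notin x :: s)) w].
Proof.
elim: s x => [|y s IHs] x; first by exists [::].
rewrite /= => /and3P[px py ps] /andP[x_lt_y y_path].
have [w [w_size w_uniq w_roots w_between]] := IHs y (introT andP (conj py ps)) y_path.
have [z] := poly_rolle x_lt_y (etrans (rootP px) (esym (rootP py))).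
rewrite in_itv /= => /andP[x_lt_z z_lt_y] p'z.
have y_lt_s := order_path_min lt_trans y_path.
exists (z :: w); split => /=; first by rewrite w_size.
- rewrite w_uniq andbT; apply/negP => /(allP w_between)/andP[y_lt_z _].
  by move: (lt_trans z_lt_y y_lt_z); rewrite ltxx.
- by rewrite w_roots andbT; apply/rootP.
rewrite x_lt_z !inE (gt_eqF x_lt_z) (lt_eqF z_lt_y) /=.
apply/andP; split.
  by apply/negP => /(allP y_lt_s) y_lt_z; move: (lt_trans z_lt_y y_lt_z); rewrite ltxx.
apply/allP => v /(allP w_between) /andP[y_lt_v v_notin].
have x_lt_v := lt_trans x_lt_y y_lt_v.
by rewrite x_lt_v in_cons (gt_eqF x_lt_v).
Qed.

Lemma dvdp_deriv_prod_XsubC s r W :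
  perm_eq s (undup s ++ r) -> uniq W -> all (fun w => w \notin s) W ->
  all (root (\prod_(x <- s) ('X - x%:P))^`()) W ->
  \prod_(y <- r ++ W) ('X - y%:P) %| (\prod_(x <- s) ('X - x%:P))^`().
Proof.
move=> s_perm uniq_W W_new roots_W; set p := \prod_(x <- s) _.
have [-> | p'_neq0] := eqVneq p^`() 0; first exact: dvdp0.
have count_s y : count_mem y s = ((y \in s) + count_mem y r)%N.
  by rewrite (permP s_perm) count_cat count_uniq_mem ?undup_uniq ?mem_undup.
apply: prod_XsubC_dvdp => // y; rewrite count_cat.
have [y_s | y_s] := boolP (y \in s).
  have -> : count_mem y W = 0%N.
    by apply/count_memPn/negP => /(allP W_new); rewrite y_s.
  rewrite addn0 mup_geq //; apply: dvdp_deriv_exp_XsubC.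
  have := count_s y; rewrite y_s add1n => <-.
  by rewrite -mup_geq ?mu_prod_XsubC // monic_neq0 // monic_prod_XsubC.
have := count_s y; rewrite (negbTE y_s) add0n (count_memPn y_s) => <-.
rewrite count_uniq_mem //; have [y_W | //] := boolP (y \in W).
by rewrite -XsubC_dvd // dvdp_XsubCl (allP roots_W).
Qed.

(* Besides the multiple roots of [p] (with one copy fewer), [p^`()] vanishes at a
   Rolle point between any two consecutive distinct roots: a full set of roots. *)
Lemma real_rooted_deriv_prod_XsubC s : real_rooted (\prod_(x <- s) ('X - x%:P))^`().
Proof.
have [-> | s_neq0] := eqVneq s [::].
  by exists 0, [::]; rewrite big_nil derivC scale0r.
set p := \prod_(x <- s) _.
have size_p' : size p^`() = size s by rewrite size_deriv size_prod_XsubC.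
have : sorted <%R (sort <=%R (undup s)) by rewrite sort_lt_sorted undup_uniq.
have mem_V : sort <=%R (undup s) =i s by move=> y; rewrite mem_sort mem_undup.
have size_V : size (sort <=%R (undup s)) = size (undup s) by rewrite size_sort.
case: (sort _ _) mem_V size_V => [|x V] mem_V size_V.
  have [y y_s] : exists y, y \in s.
    by case: (s) s_neq0 => // y t _; exists y; rewrite mem_head.
  by have := mem_V y; rewrite y_s.
move=> /= x_path; have p_roots : all (root p) (x :: V).
  by apply/allP => y; rewrite mem_V /p root_prod_XsubC.
have [W [size_W uniq_W roots_W W_between]] := rolle_interlacing p_roots x_path.
have W_new : all (fun w => w \notin s) W.
  by apply/allP => w /(allP W_between) /andP[_]; rewrite mem_V.
have [r s_perm] := perm_to_subseq (undup_subseq s).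
move/dvdp_size_eqp: (dvdp_deriv_prod_XsubC s_perm uniq_W W_new roots_W).
rewrite size_prod_XsubC size_cat size_W size_p' (perm_size s_perm) size_cat.
rewrite -size_V addnC eqxx => /esym/eqp_eq.
rewrite (eqP (monic_prod_XsubC _ _ _)) scale1r => <-.
by exists (lead_coef p^`()), (r ++ W).
Qed.

Lemma real_rooted_deriv p : real_rooted p -> real_rooted p^`().
Proof.
case=> c [s ->]; have [d [t p'_eq]] := real_rooted_deriv_prod_XsubC s.
by exists (c * d), t; rewrite derivZ p'_eq scalerA.
Qed.

Lemma real_rooted_newton0 p : real_rooted p -> 2 * p`_0 * p`_2 <= p`_1 ^+ 2.
Proof.
case=> c [s ->]; rewrite !coefZ -subr_ge0.
set q := \prod_(x <- s) _; set r := (X in 0 <= X).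
have -> : r = c ^+ 2 * (q`_1 ^+ 2 - 2 * q`_0 * q`_2) by rewrite /r; ring.
rewrite mulr_ge0 ?sqr_ge0 // {r}/q subr_ge0.
elim: s => [|a s]; first by rewrite big_nil !coefC /= mulr0 sqr_ge0.
rewrite big_cons mulrBl !coefB !coefXM !coefCM /=.
set q0 := _`_0; set q1 := _`_1; set q2 := _`_2 => newton_q; rewrite -subr_ge0.
have -> : (q0 - a * q1) ^+ 2 - 2 * (0 - a * q0) * (q1 - a * q2)
    = q0 ^+ 2 + a ^+ 2 * (q1 ^+ 2 - 2 * q0 * q2) by ring.
by rewrite addr_ge0 ?sqr_ge0 // mulr_ge0 ?sqr_ge0 // subr_ge0.
Qed.

Lemma real_rooted_newton j p : real_rooted p ->
  j.+2%:R * p`_j * p`_j.+2 <= j.+1%:R * p`_j.+1 ^+ 2.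
Proof.
elim: j p => [|j IHj] p p_rr; first by rewrite mul1r real_rooted_newton0.
have := IHj _ (real_rooted_deriv p_rr); rewrite !coef_deriv.
set a := p`_j.+1; set b := p`_j.+2; set c := p`_j.+3.
have -> : j.+2%:R * (a *+ j.+1) * (c *+ j.+3)
    = j.+1%:R * j.+2%:R * (j.+3%:R * a * c) :> R by ring.
have -> : j.+1%:R * (b *+ j.+2) ^+ 2
    = j.+1%:R * j.+2%:R * (j.+2%:R * b ^+ 2) :> R by ring.
by rewrite ler_pM2l ?mulr_gt0 ?ltr0Sn // mulrA.
Qed.

Lemma real_rooted_log_concave j p : real_rooted p -> p`_j * p`_j.+2 <= p`_j.+1 ^+ 2.
Proof.
move=> /(real_rooted_newton j); rewrite -mulrA => newton.
have [prod_le0 | prod_gt0] := lerP (p`_j * p`_j.+2) 0.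
  exact: le_trans prod_le0 (sqr_ge0 _).
rewrite -(ler_pM2l (ltr0Sn R j)); apply: le_trans newton.
by apply: ler_wpM2r; [exact: ltW | rewrite ler_nat].
Qed.

End RealRootedPolynomials.

Lemma finset_ind (T : finType) (P : {set T} -> Prop) :
  P set0 -> (forall x (S : {set T}), x \notin S -> P S -> P (x |: S)) -> forall S, P S.
Proof.
move=> P0 PU1 S; elim: {S}#|S| {-2}S (eqxx #|S|) => [|c IHc] S.
  by rewrite cards_eq0 => /eqP ->.
have [-> | [x x_S]] := set_0Vmem S; first by rewrite cards0.
move=> card_S; rewrite -(setD1K x_S); apply: PU1; first by rewrite setD11.
by apply: IHc; move: card_S; rewrite (cardsD1 x) x_S add1n eqSS.
Qed.

Lemma subsetU1_notin (T : finType) (x : T) (A B : {set T}) :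
  x \notin A -> (A \subset x |: B) = (A \subset B).
Proof.
move=> x_A; apply/subsetP/subsetP => sub y y_A; last by rewrite in_setU1 sub ?orbT.
have /setU1P[y_x | //] := sub y y_A.
by rewrite -y_x y_A in x_A.
Qed.

Arguments esym_on : simpl never.

Section ElementarySymmetric.
Variables (R : realType) (n : nat) (kappa : 'I_n -> R).
Implicit Types (S : {set 'I_n}) (x j : 'I_n) (m k : nat).
Local Notation e m S := (esym_on (Posz m) kappa S).

Lemma esym_on0 S : e 0 S = 1.
Proof.
rewrite /esym_on (big_pred1 set0) ?big_set0 // => A /=.
by rewrite cards_eq0; case: eqP => [->|]; rewrite ?sub0set ?andbF.
Qed.

Lemma esym_on_set0 m : e m.+1 set0 = 0.
Proof.
rewrite /esym_on big_pred0 // => A; rewrite subset0.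
by case: eqP => [->|]; rewrite ?cards0.
Qed.

Lemma esym_onU1 x S m : x \notin S ->
  e m.+1 (x |: S) = kappa x * e m S + e m.+1 S.
Proof.
move=> x_S; rewrite /esym_on (bigID (fun A : {set _} => x \in A)) /=; congr (_ + _).
  rewrite big_distrr /= (reindex_onto (fun B => x |: B) (fun A => A :\ x)) /=; last first.
    by move=> A /andP[_ x_A]; rewrite setD1K.
  apply: eq_big => B; last first.
    by move=> /andP[_ /eqP B_eq]; rewrite big_setU1 //= -B_eq setD11.
  have [x_B | x_B] := boolP (x \in B).
    have -> : (B \subset S) = false by apply: contraNF x_S => /subsetP; apply.
    suff -> : ((x |: B) :\ x == B) = false by rewrite andbF.
    by apply: contraTF x_B => /eqP <-; rewrite setD11.
  rewrite setU1K // eqxx setU11 cardsU1 x_B add1n eqSS !andbT.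
  by rewrite subUset sub1set setU11 subsetU1_notin.
apply: eq_bigl => A; have [x_A | x_A] /= := boolP (x \in A).
  by rewrite andbF; apply/esym/andP => -[/subsetP/(_ x x_A) x_in_S] _; rewrite x_in_S in x_S.
by rewrite andbT subsetU1_notin.
Qed.

Lemma esym_onD1 x S m : x \in S ->
  e m.+1 S = kappa x * e m (S :\ x) + e m.+1 (S :\ x).
Proof. by move=> x_S; rewrite -{1}(setD1K x_S) esym_onU1 // setD11. Qed.

Definition esym_genpoly S : {poly R} := \prod_(j in S) (1 + kappa j *: 'X).

Lemma coef_esym_genpoly S m : (esym_genpoly S)`_m = e m S.
Proof.
elim/finset_ind: S m => [|x S x_S IHS] m.
  by rewrite /esym_genpoly big_set0 coef1; case: m => [|m]; rewrite ?esym_on0 ?esym_on_set0.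
have -> : esym_genpoly (x |: S) = (1 + kappa x *: 'X) * esym_genpoly S.
  by rewrite /esym_genpoly big_setU1.
rewrite mulrDl mul1r -scalerAl coefD coefZ coefXM.
case: m => [|m]; first by rewrite !IHS !esym_on0 mulr0 addr0.
by rewrite esym_onU1 // !IHS addrC.
Qed.

Lemma real_rooted_esym_genpoly S : real_rooted (esym_genpoly S).
Proof.
apply: big_ind => [|p q|j _]; first by exists 1, [::]; rewrite big_nil scale1r.
  exact: real_rootedM.
have [-> | kappa_j_neq0] := eqVneq (kappa j) 0.
  by exists 1, [::]; rewrite big_nil scale0r addr0 scale1r.
exists (kappa j), [:: - (kappa j)^-1]; rewrite big_seq1 scalerBr -!mul_polyC.
by rewrite -polyCM mulrN mulfV // polyCN opprK addrC mul_polyC.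
Qed.

Lemma esym_on_log_concave S m : e m S * e m.+2 S <= e m.+1 S ^+ 2.
Proof.
rewrite -!coef_esym_genpoly; apply: real_rooted_log_concave.
exact: real_rooted_esym_genpoly.
Qed.

Definition in_Gamma_on k S := forall m, (m <= k)%N -> 0 < e m S.

Lemma in_Gamma_on_setD1 k S j :
  j \in S -> in_Gamma_on k.+1 S -> in_Gamma_on k (S :\ j).
Proof.
move=> j_S; elim: k => [|k IHk] S_Gamma m.
  by rewrite leqn0 => /eqP ->; rewrite esym_on0.
have T_Gamma := IHk (fun m m_le => S_Gamma m (leqW m_le)).
rewrite leq_eqVlt ltnS => /orP[/eqP -> | ]; last exact: T_Gamma.
have A_gt0 := T_Gamma k (leqnn k).
have S1_gt0 := S_Gamma k.+1 (leqnSn _); have S2_gt0 := S_Gamma k.+2 (leqnn _).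
rewrite (esym_onD1 _ j_S) in S1_gt0; rewrite (esym_onD1 _ j_S) in S2_gt0.
move: (esym_on_log_concave (S :\ j) k) A_gt0 S1_gt0 S2_gt0; set x := kappa j.
set A := e k _; set C := e k.+1 _; set B := e k.+2 _ => newton A_gt0 S1_gt0 S2_gt0.
rewrite ltNge; apply/negP => C_le0.
(* [C <= 0] forces [x A > - C >= 0], and then [A B > A (- x C) >= C ^+ 2]. *)
have lt_AB : A * - (x * C) < A * B by rewrite ltr_pM2l //; lra.
have : C ^+ 2 <= A * - (x * C).
  have -> : A * - (x * C) = x * A * - C by ring.
  by rewrite expr2 -mulrNN ler_wpM2r; lra.
lra.
Qed.

Lemma esym_on_sum_mulD1 S m :
  \sum_(j in S) kappa j * e m (S :\ j) = m.+1%:R * e m.+1 S.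
Proof.
elim/finset_ind: S m => [|x S x_S IHS] m; first by rewrite big_set0 esym_on_set0 mulr0.
have xS_D1 j : j \in S -> (x |: S) :\ j = x |: (S :\ j).
  move=> j_S; apply/setP => y; rewrite !inE; case: eqVneq => [-> | //].
  by case: eqVneq => [x_j | //]; rewrite -x_j j_S in x_S.
rewrite big_setU1 //= setU1K // esym_onU1 //.
under eq_bigr => j j_S do rewrite xS_D1 //.
case: m => [|m].
  have sum_kappa : \sum_(j in S) kappa j * e 0 (x |: S :\ j) = e 1 S.
    have := IHS 0%N; rewrite mul1r => <-.
    by apply: eq_bigr => j _; rewrite !esym_on0.
  by rewrite sum_kappa esym_on0; ring.
under eq_bigr => j j_S do rewrite esym_onU1 ?in_setD1 ?negb_and ?x_S ?orbT // mulrDr mulrCA.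
rewrite big_split /= -mulr_sumr !IHS; ring.
Qed.

Lemma esym_on_sumD1 S m : \sum_(j in S) e m (S :\ j) = (#|S|%:R - m%:R) * e m S.
Proof.
case: m => [|m].
  by under eq_bigr => j _ do rewrite esym_on0; rewrite sumr_const esym_on0; ring.
have D1_eq j : j \in S -> e m.+1 (S :\ j) = e m.+1 S - kappa j * e m (S :\ j).
  by move=> j_S; rewrite (esym_onD1 _ j_S); ring.
rewrite (eq_bigr _ D1_eq) sumrB esym_on_sum_mulD1 sumr_const -mulr_natl; ring.
Qed.

Lemma in_Gamma_on_lower_bound k S i M : in_Gamma_on k.+1 S -> i \in S ->
  {in S, forall j, kappa j <= M} -> 0 <= M -> (k.+1 <= #|S|)%N ->
  k.+1%:R * - kappa i <= (#|S|%:R - k.+1%:R) * M.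
Proof.
move=> S_Gamma i_S le_M M_ge0 k_lt_S; set T := S :\ i.
have T_Gamma : in_Gamma_on k T := in_Gamma_on_setD1 i_S S_Gamma.
have A_gt0 : 0 < e k T := T_Gamma k (leqnn k).
have card_S : #|S|%:R = #|T|%:R + 1 :> R by rewrite (cardsD1 i S) i_S natrD addrC.
have C_le : k.+1%:R * e k.+1 T <= M * (#|T|%:R - k%:R) * e k T.
  have [C_le0 | C_gt0] := lerP (e k.+1 T) 0.
    apply: (@le_trans _ _ 0); first by rewrite mulr_ge0_le0.
    rewrite !mulr_ge0 ?(ltW A_gt0) // subr_ge0 ler_nat -ltnS.
    by rewrite (cardsD1 i S) i_S in k_lt_S.
  have T_Gamma' : in_Gamma_on k.+1 T.
    by move=> m; rewrite leq_eqVlt => /orP[/eqP -> // | /T_Gamma].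
  rewrite -esym_on_sum_mulD1 -mulrA -esym_on_sumD1 mulr_sumr; apply: ler_sum => j j_T.
  rewrite ler_wpM2r ?(ltW (in_Gamma_on_setD1 j_T T_Gamma' (leqnn k))) // le_M //.
  by move: j_T; rewrite in_setD1 => /andP[].
have S_gt0 := S_Gamma k.+1 (leqnn _); rewrite (esym_onD1 _ i_S) -/T in S_gt0.
have := mulr_gt0 (ltr0Sn R k) S_gt0.
rewrite -(ler_pM2r A_gt0) card_S; rewrite -!natr1 in C_le *; lra.
Qed.

End ElementarySymmetric.

Section ExpDifferenceQuotient.
Variable R : realType.
Implicit Types x y : R.

Lemma exp_dq_mul x y : exp_dq x y * (x - y) = expR x - expR y.
Proof.
rewrite /exp_dq; case: eqVneq => [-> | x_neq_y]; first by rewrite !subrr mulr0.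
by rewrite mulfVK // subr_eq0.
Qed.

Lemma expR_mulD_le x t : expR x * (1 + t) <= expR (x + t).
Proof. by rewrite expRD ler_wpM2l ?expR_ge1Dx ?ltW ?expR_gt0. Qed.

Lemma expR_le_exp_dq x y : expR x <= (1 + `|x - y|) * exp_dq x y.
Proof.
have [-> | x_neq_y] := eqVneq x y.
  by rewrite /exp_dq eqxx subrr normr0 addr0 mul1r.
have D_mul := exp_dq_mul x y; set D := exp_dq x y in D_mul *.
have ex_gt0 := expR_gt0 x; have ey_gt0 := expR_gt0 y.
have [x_lt_y | y_lt_x | x_eq_y] := ltgtP x y; last by rewrite x_eq_y eqxx in x_neq_y.
- have := expR_mulD_le x (y - x); rewrite subrKC => ey_ge.
  have t_gt0 : 0 < y - x by rewrite subr_gt0.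
  have D_ge : expR x <= D.
    by rewrite -(ler_pM2r t_gt0) -opprB !mulrN D_mul; lra.
  by apply: (le_trans D_ge); rewrite ler_peMl ?lerDl //; lra.
- have := expR_mulD_le y (x - y); rewrite subrKC => ex_ge.
  have t_gt0 : 0 < x - y by rewrite subr_gt0.
  rewrite gtr0_norm // -(ler_pM2r t_gt0) -mulrA D_mul.
  nra.
Qed.

Lemma exp_dq_weighted_ge c M x y a b : 0 < M -> 0 <= a -> 0 <= x * a + b ->
  1 + `|x - y| <= c * M ->
  expR x / M * (x * a + b) <= c * expR x * a + c * exp_dq x y * (y * a + b).
Proof.
move=> M_gt0 a_ge0 S_ge0 gap_le.
have D_mul := exp_dq_mul x y; have D_ge := expR_le_exp_dq x y.
set D := exp_dq x y in D_mul D_ge *.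
have c_gt0 : 0 < c by rewrite -(pmulr_lgt0 _ M_gt0); have := normr_ge0 (x - y); lra.
have gap_gt0 : 0 < 1 + `|x - y| by rewrite ltr_pwDl.
have D_gt0 : 0 < D.
  by rewrite -(pmulr_rgt0 _ gap_gt0); exact: lt_le_trans (expR_gt0 x) D_ge.
have ex_le : expR x / M <= c * D.
  rewrite ler_pdivrMr // mulrAC; apply: le_trans D_ge _.
  by rewrite ler_pM2r.
have ex_eq : expR x = D * (x - y) + expR y by rewrite D_mul subrK.
have -> : c * expR x * a + c * D * (y * a + b) = c * expR y * a + c * D * (x * a + b).
  by rewrite ex_eq; ring.
have := mulr_ge0 (mulr_ge0 (ltW c_gt0) (ltW (expR_gt0 y))) a_ge0.
have /= := ler_wpM2r S_ge0 ex_le; lra.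
Qed.

End ExpDifferenceQuotient.

Section Deletions.
Variables (R : realType) (n : nat) (kappa : 'I_n -> R).
Implicit Types (i l : 'I_n) (k : nat).

Lemma in_Gamma_onT k : in_Gamma k kappa -> in_Gamma_on kappa k [set: 'I_n].
Proof. by move=> G [|m] m_le; [rewrite esym_on0 | exact: G]. Qed.

Lemma sigma1E k i : sigma1 (k.+1%:Z - 1) kappa i = esym_on k kappa [set~ i].
Proof. by rewrite /sigma1 -addn1 PoszD addrK. Qed.

Lemma sigma2E k i l : sigma2 (k.+2%:Z - 2) kappa i l = esym_on k kappa (~: [set i; l]).
Proof. by rewrite /sigma2 -addn2 PoszD addrK. Qed.

Lemma sigma2C m i l : sigma2 m kappa i l = sigma2 m kappa l i.
Proof. by rewrite /sigma2 setUC. Qed.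

Lemma setC2_setD1 i l : ~: [set i; l] = [set~ i] :\ l.
Proof. by apply/setP => j; rewrite !inE negb_or andbC. Qed.

Lemma sigma1_split k i l : i != l ->
  sigma1 (k.+1%:Z - 1) kappa i
  = kappa l * sigma2 (k.+1%:Z - 2) kappa i l + esym_on k kappa (~: [set i; l]).
Proof.
move=> il; rewrite sigma1E setC2_setD1; case: k => [|k].
  by rewrite !esym_on0 /sigma2 /esym_on mulr0 add0r.
by rewrite sigma2E setC2_setD1 -esym_onD1 // !inE eq_sym.
Qed.

Lemma sigma1_gt0 k i :
  in_Gamma_on kappa k.+1 [set: 'I_n] -> 0 < sigma1 (k.+1%:Z - 1) kappa i.
Proof.
by move=> G; rewrite sigma1E -setTD; apply: in_Gamma_on_setD1 (in_setT i) G k (leqnn k).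
Qed.

Lemma sigma2_ge0 k i l : i != l -> in_Gamma_on kappa k.+1 [set: 'I_n] ->
  0 <= sigma2 (k.+1%:Z - 2) kappa i l.
Proof.
move=> il G; case: k G => [|k] G; first by rewrite /sigma2 /esym_on.
have l_D1 : l \in [set: 'I_n] :\ i by rewrite !inE andbT eq_sym.
rewrite sigma2E setC2_setD1 -setTD; apply: ltW.
exact: in_Gamma_on_setD1 l_D1 (in_Gamma_on_setD1 (in_setT i) G) k (leqnn k).
Qed.

End Deletions.

Lemma delta_gap_bound (R : realType) (K M x y : R) : 1 <= K -> 3 * K <= M ->
  x <= M -> y <= M -> K * - x <= (K - 1) * M -> K * - y <= (K - 1) * M ->
  1 + `|x - y| <= (2 - (3 * K)^-1) * M.
Proof.
move=> K_ge1 M_ge x_le y_le x_ge y_ge.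
have K3_gt0 : 0 < 3 * K by lra.
rewrite -(ler_pM2l K3_gt0).
have -> : 3 * K * ((2 - (3 * K)^-1) * M) = (6 * K - 1) * M.
  by rewrite mulrA mulrBr mulfV ?gt_eqF //; ring.
have Mx_ge0 : 0 <= M - x by rewrite subr_ge0.
have My_ge0 : 0 <= M - y by rewrite subr_ge0.
have := mulr_ge0 (ltW K3_gt0) Mx_ge0; have := mulr_ge0 (ltW K3_gt0) My_ge0.
by have [y_le_x | x_lt_y] := lerP y x; nra.
Qed.

Theorem lemma3p1 (R : realType) (n k : nat) :
  (1 <= k)%N -> (k <= n)%N -> (n < 2 * k)%N ->
  exists M0 : R,
    forall (kappa : 'I_n -> R) (i1 : 'I_n),
      in_Gamma k kappa ->
      (forall j : 'I_n, kappa j <= kappa i1) ->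
      M0 <= kappa i1 ->
      forall i l : 'I_n, i != l ->
        let delta := ((3 * k)%:R)^-1 : R in
        (2 - delta) * expR (kappa l) * sigma2 (k%:Z - 2) kappa i l
        + (2 - delta) * exp_dq (kappa l) (kappa i) * sigma1 (k%:Z - 1) kappa l
        >= expR (kappa l) / kappa i1 * sigma1 (k%:Z - 1) kappa i.
Proof.
case: k => [//|k] _ k_lt_n n_lt_2k; exists (3 * k.+1)%:R.
move=> kappa i1 /in_Gamma_onT Gamma max_i1 M_ge i l il /=.
set M := kappa i1 in max_i1 M_ge *; rewrite natrM in M_ge *.
set K : R := k.+1%:R in M_ge *.
have K_ge1 : 1 <= K by rewrite ler1n.
have n_le : n%:R + 1 <= 2 * K by rewrite natr1 -natrM ler_nat.
have lower j : K * - kappa j <= (K - 1) * M.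
  have M_gt0 : 0 < M by lra.
  have := in_Gamma_on_lower_bound Gamma (in_setT j) (fun j _ => max_i1 j) (ltW M_gt0).
  rewrite cardsT card_ord => /(_ k_lt_n) /le_trans; apply; rewrite ler_pM2r //; lra.
have li : l != i by rewrite eq_sym.
rewrite (sigma1_split _ _ il) (sigma1_split _ _ li) (sigma2C _ _ l) [[set l; i]]setUC.
apply: exp_dq_weighted_ge; first lra.
- exact: sigma2_ge0.
- by rewrite -sigma1_split // ltW // sigma1_gt0.
exact: delta_gap_bound.
Qed.
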